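(* (a) If a topological $G$-system $(X,T)$ is CAM, then it is weakly CAM. (b) If a $\mathbb{Z}$-system $(X,T)$ is expansive and weakly CAM, then it is CAM.
   Context: Let $G$ be a countable discrete group. A topological $G$-system $(X,T)$ consists of a compact metric space $X$ and an action $T\colon G\to\mathrm{Homeo}(X)$, $g\mapsto T_g$; a $\mathbb{Z}$-system is given by one homeomorphism $T$. The system is topologically transitive if for all nonempty open $U,V\subseteq X$ there is $g\in G$ with $T_gU\cap V\neq\emptyset$; the action is faithful if $T_g=\mathrm{id}_X$ only when $g$ is the identity. A point is periodic if its $G$-orbit is finite. The system is chaotic almost minimal (CAM) if: (1) it is topologically transitive and the action is faithful; (2) the periodic points are dense in $X$; (3) every proper closed $T$-invariant subset of $X$ is finite. It is weakly CAM if (1) and (2) hold and (3') every point of $X$ has $G$-orbit that is either finite or dense in $X$. A $\mathbb{Z}$-system is expansive if there is $c>0$ such that for all $x\neq y$ there is $n\in\mathbb{Z}$ with $d(T^nx,T^ny)>c$. *)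

From HB Require Import structures.
From mathcomp Require Import all_boot all_order all_algebra.
From mathcomp Require Import all_classical all_reals all_analysis.
From mathcomp Require Import monoid.
Set Implicit Arguments.
Unset Strict Implicit.
Unset Printing Implicit Defensive.
Import Order.TTheory GRing.Theory Num.Theory.
Local Open Scope classical_set_scope.
Local Open Scope ring_scope.

Definition homeomorphism (X : topologicalType) (f : X -> X) : Prop :=
  continuous f /\ exists g : X -> X, [/\ cancel f g, cancel g f & continuous g].

Definition G_action (G : groupType) (X : topologicalType) (T : G -> X -> X) : Prop :=
  [/\ T 1%g = id,
      (forall g h : G, T (g * h)%g = T g \o T h)
    & (forall g, homeomorphism (T g))].

(* Generic dynamical notions for a family of maps T : G -> X -> X,
   e is the identity element of G. *)
Section Dyn.
Context {G : Type} (e : G) {X : topologicalType} (T : G -> X -> X).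

Definition orbit (x : X) : set X := [set T g x | g in [set: G]].

Definition topologically_transitive : Prop :=
  forall U V : set X, open U -> open V -> U !=set0 -> V !=set0 ->
    exists g : G, (T g @` U) `&` V !=set0.

Definition faithful : Prop := forall g : G, T g = id -> g = e.

Definition periodic_point (x : X) : Prop := finite_set (orbit x).

Definition invariant (A : set X) : Prop := forall g : G, T g @` A `<=` A.

Definition CAM : Prop :=
  [/\ topologically_transitive /\ faithful,
      dense [set x | periodic_point x]
    & forall A : set X, closed A -> invariant A -> A != [set: X] -> finite_set A].

Definition weakly_CAM : Prop :=
  [/\ topologically_transitive /\ faithful,
      dense [set x | periodic_point x]
    & forall x : X, finite_set (orbit x) \/ dense (orbit x)].
End Dyn.

(* Z-action generated by a homeomorphism T with inverse Tinv: n |-> T^n. *)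
Definition Ziter {X : Type} (T Tinv : X -> X) (n : int) : X -> X :=
  match n with
  | Posz k => iter k T
  | Negz k => iter k.+1 Tinv
  end.

Definition expansive {R : realType} {X : metricType R} (T Tinv : X -> X) : Prop :=
  exists2 c : R, 0 < c &
    forall x y : X, x <> y -> exists n : int, c < mdist (Ziter T Tinv n x) (Ziter T Tinv n y).

From Pilot Require Import Defs.
From HB Require Import structures.
From mathcomp Require Import all_boot all_order all_algebra.
From mathcomp Require Import all_classical all_reals all_analysis.
From mathcomp Require Import monoid.
From mathcomp Require Import zify ring lra.
(* Give [orbit] and [invariant] back to Defs (fingraph and eqtype reuse these names). *)
Import Defs.
Import Order.TTheory GRing.Theory Num.Theory numFieldNormedType.Exports.
Local Open Scope classical_set_scope.
Local Open Scope ring_scope.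

(* (a) The closure of an orbit is closed and invariant, so under CAM it is either the
   whole space (the orbit is dense) or finite.
   (b) Let A be closed, invariant, proper and, for a contradiction, infinite.  Every
   point of A is periodic, since a dense orbit inside A would force A = X.  A has a
   limit point x; a point y of A near x separates from x at a first time n (by
   expansivity with constant c), so the pair (T^n y, T^n x) lies in A x A, is c-apart,
   and stays c-close for N steps in one time direction, where N grows as y -> x.
   A cluster point (z, w) of such pairs stays c-close forever in one direction while
   d(z, w) >= c; as z and w are periodic, this contradicts expansivity. *)

Lemma compact_infinite_limit_point {T : topologicalType} {A : set T} :
  compact A -> infinite_set A -> exists2 x, A x & limit_point A x.
Proof.
move=> cA infA.
pose F S := exists2 D, finite_set D & A `\` D `<=` S.
have F_filter : Filter F.
  split; first by exists set0.
  - move=> P Q [D fD DP] [E fE EQ]; exists (D `|` E); first by rewrite finite_setU.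
    by move=> a [Aa DEa]; split; [apply: DP|apply: EQ]; split => // ?; apply: DEa; [left|right].
  - by move=> P Q PQ [D fD DP]; exists D => //; apply: subset_trans PQ.
have F_proper : ProperFilter F.
  apply: Build_ProperFilter_ex => // P [D fD DP].
  have [a [Aa Da]] : A `\` D !=set0.
    apply/set0P/eqP => AD0; apply: infA; apply: sub_finite_set fD.
    by rewrite -setD_eq0.
  by exists a; apply: DP.
have [x [Ax clx]] : exists x, A x /\ cluster F x.
  by apply: cA; exists set0 => // a [].
exists x => // U xU.
have FAx : F (A `\` [set x]) by exists [set x] => //; exact: finite_set1.
have [y [[Ay /eqP yx] Uy]] := clx _ _ FAx xU.
by exists y.
Qed.

Lemma compact_nested_cluster {T : topologicalType} {K : set T} {C : nat -> set T} :
  compact K -> {homo C : m n / (m <= n)%N >-> n `<=` m} ->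
  (forall n, C n !=set0) -> (forall n, C n `<=` K) ->
  exists2 x, K x & forall n, closure (C n) x.
Proof.
move=> cK C_antitone C_nonempty CK.
pose F := filter_from [set: nat] C.
have F_filter : Filter F.
  apply: filter_fromT_filter; first by exists 0%N.
  move=> m n; exists (maxn m n) => p Cp.
  by split; apply: C_antitone Cp; rewrite ?leq_maxl ?leq_maxr.
have F_proper : ProperFilter F by apply: filter_from_proper => n _; exact: C_nonempty.
have [x [Kx clx]] := cK F F_proper (ex_intro2 _ _ 0%N I (CK 0%N)).
by exists x => // n B; apply: clx; exists n.
Qed.

Lemma or_forall_antitone {P Q : nat -> Prop} :
  (forall m n, (m <= n)%N -> P n -> P m) -> (forall m n, (m <= n)%N -> Q n -> Q m) ->
  (forall n, P n \/ Q n) -> (forall n, P n) \/ (forall n, Q n).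
Proof.
move=> P_antitone Q_antitone PQ; have [allP|/existsNP[m notPm]] := pselect (forall n, P n).
  by left.
right => n; case: (PQ (maxn n m)) => [/(P_antitone m _ (leq_maxr n m))//|].
exact: Q_antitone (leq_maxl n m).
Qed.

Section InvariantSets.
Context {G : Type} {X : topologicalType} {T : G -> X -> X}.

Lemma closure_invariant {A : set X} :
  (forall g, continuous (T g)) -> invariant T A -> invariant T (closure A).
Proof.
move=> cT invA g _ [x clAx <-] B /(cT g x) /clAx [y [Ay By]].
by exists (T g y); split => //; apply: invA; exists y.
Qed.

Lemma dense_orbit_closed_invariantT {a : X} {A : set X} :
  dense (orbit T a) -> A a -> closed A -> invariant T A -> A = setT.
Proof.
move=> dense_a Aa clA invA; apply/seteqP; split => // x _; apply: contrapT => nAx.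
have [y [nAy [g _ gay]]] := dense_a (~` A) (ex_intro _ x nAx) (closed_openC clA).
by apply: nAy; rewrite -gay; apply: (invA g); exists a.
Qed.

End InvariantSets.

Lemma orbit_invariant {G : groupType} {X : topologicalType} {T : G -> X -> X} :
  (forall g h, T (g * h)%g = T g \o T h) -> forall x, invariant T (orbit T x).
Proof. by move=> TM x g _ [_ [h _ <-] <-]; exists (g * h)%g => //; rewrite TM. Qed.

Lemma CAM_weakly_CAM {G : groupType} {X : topologicalType} (T : G -> X -> X) :
  G_action T -> CAM 1%g T -> weakly_CAM 1%g T.
Proof.
move=> [_ TM homeoT] [trans_faithful dense_per closed_finite]; split => // x.
have [clT|/eqP clN] := pselect (closure (orbit T x) = setT).
  right => O [p Op] oO; have : closure (orbit T x) p by rewrite clT.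
  by move=> /(_ O (open_nbhs_nbhs (conj oO Op))) [y [? ?]]; exists y.
left; apply: sub_finite_set (@subset_closure _ _) _.
apply: closed_finite; [exact: closed_closure| |exact: clN].
apply: closure_invariant; last exact: orbit_invariant.
by move=> g; have [] := homeoT g.
Qed.

Section ZAction.
Context {X : Type} {T Tinv : X -> X} (TK : cancel T Tinv) (TinvK : cancel Tinv T).
Local Notation f := (Ziter T Tinv).

Lemma ZiterS n x : f (n + 1) x = T (f n x).
Proof.
case: n => [k|[|k]] /=; first by rewrite addn1 iterS.
  by rewrite TinvK.
by rewrite subn1 /= TinvK.
Qed.

Lemma ZiterB1 n x : f (n - 1) x = Tinv (f n x).
Proof. by rewrite -{2}(subrK 1 n) ZiterS TK. Qed.

Lemma ZiterD m n x : f (m + n) x = f m (f n x).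
Proof.
elim/int_rect: m => [|m IH|m IH]; first by rewrite add0r.
  by rewrite -addn1 PoszD addrAC ZiterS IH -ZiterS.
have -> : - (m.+1)%:Z = - m%:Z - 1 by lia.
by rewrite addrAC ZiterB1 IH -ZiterB1.
Qed.

Lemma Ziter_periodM {p z} : f p z = z -> forall k : int, f (p * k) z = z.
Proof.
move=> per_p; have per_Np : f (- p) z = z by rewrite -{1}per_p -ZiterD addNr.
elim/int_rect => [|k IH|k IH]; first by rewrite mulr0.
  by rewrite -addn1 PoszD mulrDr mulr1 addrC ZiterD IH.
by rewrite -addn1 PoszD opprD mulrDr mulrN1 addrC ZiterD IH.
Qed.

End ZAction.

Section ZPeriodic.
Context {X : topologicalType} {T Tinv : X -> X} (TK : cancel T Tinv) (TinvK : cancel Tinv T).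
Local Notation f := (Ziter T Tinv).

Lemma Ziter_finite_orbit_period {z} : finite_set (orbit f z) ->
  exists2 L : nat, (0 < L)%N & f L%:Z z = z.
Proof.
move=> fin_z; apply: contrapT => no_period; apply: infinite_nat.
have return_time n m : (n < m)%N -> f n%:Z z <> f m%:Z z.
  move=> nm e; apply: no_period; exists (m - n)%N; first by rewrite subn_gt0.
  have -> : (m - n)%N%:Z = - n%:Z + m%:Z by lia.
  by rewrite (ZiterD TK TinvK) -e -(ZiterD TK TinvK) addNr.
have inj : injective (fun n : nat => f n%:Z z).
  move=> n m e; case: (ltngtP n m) => // [nm|mn]; first by case: (return_time _ _ nm e).
  by case: (return_time _ _ mn (esym e)).
apply: sub_finite_set (finite_preimage (fun n m _ _ => inj n m) fin_z) => n _.
by exists n%:Z.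
Qed.

End ZPeriodic.

Lemma continuous_Ziter {X : topologicalType} {T Tinv : X -> X} :
  continuous T -> continuous Tinv -> forall n, continuous (Ziter T Tinv n).
Proof.
have continuous_iter (g : X -> X) k : continuous g -> continuous (iter k g).
  move=> cg; elim: k => [|k IH] /= x; first exact: cvg_id.
  exact: continuous_comp (IH x) (cg _).
by move=> cT cTinv [k|k] /=; apply: continuous_iter.
Qed.

Section MetricDistance.
Context {R : realType} {X : metricType R}.

Lemma continuous_mdist : continuous (fun p : X * X => mdist p.1 p.2 : R).
Proof.
move=> [z w]; apply/cvgrPdist_lt => e e_gt0 /=.
have e2_gt0 : 0 < e / 2 by rewrite divr_gt0.
exists (ball z (e / 2), ball w (e / 2)); first by split; apply: nbhsx_ballx.
move=> [a b] /= []; rewrite !ballEmdist /= => za wb.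
have := metric_triangle z a w; have := metric_triangle a b w.
have := metric_triangle a z b; have := metric_triangle z w b.
rewrite (metric_sym b w) (metric_sym a z) ltr_norml => ? ? ? ?.
apply/andP; split; lra.
Qed.

Lemma closed_mdist_ge (c : R) : closed [set p : X * X | c <= mdist p.1 p.2].
Proof. exact: preimage_closed (fun p _ => continuous_mdist p) (@closed_ge _ c). Qed.

Lemma closed_mdist_le {u : X -> X} (c : R) : continuous u ->
  closed [set p : X * X | mdist (u p.1) (u p.2) <= c].
Proof.
move=> cu; apply: preimage_closed (@closed_le _ c) => p _.
apply: continuous2_cvg; first exact: (continuous_mdist (_, _)).
  exact: continuous_comp (@cvg_fst _ _ _ _ _) (cu _).
exact: continuous_comp (@cvg_snd _ _ _ _ _) (cu _).
Qed.

End MetricDistance.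

Section Expansive.
Context {R : realType} {X : metricType R} {T Tinv : X -> X}.
Hypotheses (TK : cancel T Tinv) (TinvK : cancel Tinv T).
Hypotheses (cT : continuous T) (cTinv : continuous Tinv).
Local Notation f := (Ziter T Tinv).
Variable c : R.
Hypothesis c_gt0 : 0 < c.
Hypothesis c_expansive : forall x y, x <> y -> exists n : int, c < mdist (f n x) (f n y).

Definition separated_then_close (s : int) (N : nat) : set (X * X) :=
  [set p | c <= mdist p.1 p.2] `&`
  \bigcap_(j in [set j : nat | (0 < j <= N)%N])
    [set p | mdist (f (s * j%:Z) p.1) (f (s * j%:Z) p.2) <= c].

Lemma closed_separated_then_close s N : closed (separated_then_close s N).
Proof.
apply: closedI; first exact: closed_mdist_ge.
by apply: closed_bigI => j _; apply: closed_mdist_le; exact: continuous_Ziter.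
Qed.

Lemma separated_then_close_antitone s :
  {homo separated_then_close s : m n / (m <= n)%N >-> n `<=` m}.
Proof.
move=> m n mn p [sep close]; split => // j /andP[j_gt0 jm]; apply: close.
by rewrite /= j_gt0 (leq_trans jm mn).
Qed.

Lemma near_Ziter_close x N :
  \forall y \near x, forall k : int, (absz k <= N)%N -> mdist (f k x) (f k y) < c.
Proof.
have near_k (k : int) : \forall y \near x, mdist (f k x) (f k y) < c.
  exact: (metricType_numDomainType.cvgr_dist_lt (continuous_Ziter cT cTinv k x) c_gt0).
have : \forall y \near x, forall i : 'I_N.+1,
    mdist (f i x) (f i y) < c /\ mdist (f (- i%:Z) x) (f (- i%:Z) y) < c.
  by apply: filter_forall => i; apply: filterS2 (near_k i) (near_k (- i%:Z)).
apply: filterS => y close k kN.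
have kN1 : (absz k < N.+1)%N by rewrite ltnS.
have [->|->] : k = absz k \/ k = - (absz k)%:Z by lia.
  exact: (close (Ordinal kN1)).1.
exact: (close (Ordinal kN1)).2.
Qed.

(* The pair is taken at the first time n at which y separates from x. *)
Lemma limit_point_separated_then_close {A : set X} {x : X} N :
  invariant f A -> A x -> limit_point A x ->
  (A `*` A `&` (separated_then_close 1 N `|` separated_then_close (-1) N)) !=set0.
Proof.
move=> invA Ax /(_ _ (near_Ziter_close x N)) [y [/eqP yx Ay close_N]].
have escape : exists m, `[< exists n : int, absz n = m /\ c < mdist (f n y) (f n x) >].
  by have [n ?] := c_expansive _ _ yx; exists (absz n); apply/asboolP; exists n.
case: (ex_minnP escape) => m /asboolP[n [nm sep_n]] min_m.
have close_before (k : int) : (absz k < m)%N -> mdist (f k y) (f k x) <= c.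
  move=> km; rewrite leNgt; apply/negP => sep_k.
  by have := min_m _ (asboolT (ex_intro _ k (conj erefl sep_k))); rewrite leqNgt km.
have Nm : (N < m)%N.
  rewrite ltnNge; apply/negP => mN.
  have := close_N n; rewrite nm metric_sym => /(_ mN); lra.
have run (s : int) : (forall j : nat, (0 < j <= N)%N -> (absz (s * j%:Z + n)%R < m)%N) ->
    separated_then_close s N (f n y, f n x).
  move=> s_back; split; first exact: ltW.
  move=> j /= /s_back jm; rewrite -!(ZiterD TK TinvK); exact: close_before.
exists (f n y, f n x); split; first by split; apply: (invA n); [exists y|exists x].
have [n_ge0|n_lt0] := lerP 0 n; [right; apply: run|left; apply: run];
  by move=> j /andP[? ?]; lia.
Qed.

Lemma periodic_not_separated_then_close s z w :
  s = 1 \/ s = -1 -> finite_set (orbit f z) -> finite_set (orbit f w) ->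
  ~ (forall N, separated_then_close s N (z, w)).
Proof.
move=> s_unit fin_z fin_w sep.
have [Lz Lz_gt0 per_z] := Ziter_finite_orbit_period TK TinvK fin_z.
have [Lw Lw_gt0 per_w] := Ziter_finite_orbit_period TK TinvK fin_w.
pose L := (Lz * Lw)%N.
have L_gt0 : (0 < L)%N by rewrite muln_gt0 Lz_gt0.
have per_zL k : f (L%:Z * k) z = z by rewrite /L PoszM -mulrA (Ziter_periodM TK TinvK per_z).
have per_wL k : f (L%:Z * k) w = w.
  by rewrite /L mulnC PoszM -mulrA (Ziter_periodM TK TinvK per_w).
have zw : z <> w.
  by move=> zw; have [/= + _] := sep 0%N; rewrite zw mdistxx leNgt c_gt0.
have [n sep_n] := c_expansive _ _ zw.
(* j > 0 with s * j = n modulo the common period L *)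
have j_gt0 : 0 < s * n + L%:Z * (n * n + 1).
  have : n * n + 1 <= L%:Z * (n * n + 1) by nia.
  by case: s_unit => ->; nia.
pose j := absz (s * n + L%:Z * (n * n + 1)).
have j_pos : (0 < j)%N by rewrite /j; lia.
have [_ /(_ j)] := sep j; rewrite /= j_pos leqnn => /(_ isT).
have -> : s * j%:Z = n + L%:Z * (s * (n * n + 1)).
  by rewrite /j gez0_abs ?ltW //; case: s_unit => ->; ring.
by rewrite !(ZiterD TK TinvK) per_zL per_wL leNgt sep_n.
Qed.

Lemma expansive_weakly_CAM_CAM : compact [set: X] -> weakly_CAM 0 f -> CAM 0 f.
Proof.
move=> cX [trans_faithful dense_per orbit_dichotomy].
split => // A clA invA /eqP AnT; apply: contrapT => infA.
have per_A a : A a -> finite_set (orbit f a).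
  move=> Aa; case: (orbit_dichotomy a) => // dense_a.
  by case: AnT; exact: dense_orbit_closed_invariantT dense_a Aa clA invA.
have cA : compact A := subclosed_compact clA cX (@subsetT _ A).
have [x Ax limx] := compact_infinite_limit_point cA infA.
pose C N := A `*` A `&` (separated_then_close 1 N `|` separated_then_close (-1) N).
have C_antitone : {homo C : m n / (m <= n)%N >-> n `<=` m}.
  move=> m n mn p [AAp sep]; split => //.
  by case: sep => sep; [left|right]; apply: separated_then_close_antitone sep.
have [[z w] [Az Aw] clC] := compact_nested_cluster (compact_setX cA cA) C_antitone
  (fun N => limit_point_separated_then_close N invA Ax limx) (fun N p => @proj1 _ _).
have sep N : (separated_then_close 1 N `|` separated_then_close (-1) N) (z, w).
  have /closure_id -> := closedU (closed_separated_then_close 1 N)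
    (closed_separated_then_close (-1) N).
  by apply: closureS (clC N) => p [].
have [sep1|sepN1] := or_forall_antitone
  (fun m n mn => separated_then_close_antitone 1 m n mn (z, w))
  (fun m n mn => separated_then_close_antitone (-1) m n mn (z, w)) sep.
  exact: periodic_not_separated_then_close (or_introl erefl) (per_A z Az) (per_A w Aw) sep1.
exact: periodic_not_separated_then_close (or_intror erefl) (per_A z Az) (per_A w Aw) sepN1.
Qed.

End Expansive.

Theorem proposition2p15 :
  (forall (R : realType) (X : metricType R) (G : groupType) (T : G -> X -> X),
      countable [set: G] -> compact [set: X] -> G_action T ->
      CAM 1%g T -> weakly_CAM 1%g T)
  /\
  (forall (R : realType) (X : metricType R) (T Tinv : X -> X),
      compact [set: X] -> continuous T -> continuous Tinv ->
      cancel T Tinv -> cancel Tinv T ->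
      expansive T Tinv ->
      weakly_CAM 0%Z (Ziter T Tinv) -> CAM 0%Z (Ziter T Tinv)).
Proof.
split=> [R X G T _ _|R X T Tinv cX cT cTinv TK TinvK [c c_gt0 c_expansive]].
  exact: CAM_weakly_CAM.
exact: expansive_weakly_CAM_CAM TK TinvK cT cTinv c c_gt0 c_expansive cX.
Qed.
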